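(* Let $K$ be a field of characteristic $p$, $q$ a power of $p$, $\mathbb{F}_q\subset K$. Extend the Carlitz module to the map $\phi:\mathbb{F}_q[[T]]\to K\{\!\{\tau\}\!\}$, $\phi(\sum_{i\ge0}a_iT^i)=\sum_{i\ge0}a_i\tau^i$ (corresponding to the $A$-field structure $\iota_0$ with $\iota_0(T)=0$). Give $\mathbb{F}_q[[T]]$ the language $\mathcal{L}_T=\{0,1,T,+,\cdot\}$ and $K\{\!\{\tau\}\!\}$ the language $\mathcal{L}_{\tau,\iota_0}=\{0,1,\iota_0(T),\tau,+,\cdot\}$. Then $\phi$ is an effective Diophantine map. If Hilbert's tenth problem over $(\mathbb{F}_q[[T]],\mathcal{L}_T)$ has a negative answer, then Hilbert's tenth problem over $(K\{\!\{\tau\}\!\},\mathcal{L}_{\tau,\iota_0})$ has a negative answer.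
   Context: $K\{\!\{\tau\}\!\}$ is the twisted power series ring: series $\sum_{i\ge0}a_i\tau^i$, $a_i\in K$, with usual addition and multiplication determined by $\tau a=a^q\tau$, i.e. $(\sum a_i\tau^i)(\sum b_j\tau^j)=\sum_k(\sum_{i+j=k}a_ib_j^{q^i})\tau^k$. For a set $R$ with a language $\mathcal{L}$ (constants, functions, relations incl. $0$ and $=$), $S\subset R^k$ is Diophantine if $S=\{\vec x\mid\exists\vec y\ (f_1\wedge\dots\wedge f_r)\}$ with basic formulas $f_i$ of the form $(t_1,\dots,t_m)\in S'$, $S'$ a relation or equality and $t_j$ terms of $\mathcal{L}$. A map $d:R_1\to R_2$ is Diophantine if images (coordinatewise) of Diophantine sets are Diophantine; effective if a Diophantine definition of $d(S)$ can be algorithmically computed from one of $S$. With $S_c'(\mathcal{L})=\{x\mid\{x\}\text{ Diophantine}\}$, Hilbert's tenth problem exists over $(R,\mathcal{L})$ if there is a recursive ring $R_0$ with (constants of $\mathcal{L}$) $\subset R_0\subset S_c'(\mathcal{L})$; it has a negative answer if no algorithm decides, for finite conjunctions of basic formulas with extra coefficients in $R_0$, whether they have a solution in $R$. *)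

From mathcomp Require Import all_boot all_order all_algebra all_field.
Set Implicit Arguments. Unset Strict Implicit. Unset Printing Implicit Defensive.
Import GRing.Theory.
Local Open Scope ring_scope.

Definition npair (a b : nat) : nat := ((2 ^ a) * (b.*2).+1).-1.
Definition unpair1 (x : nat) : nat := logn 2 x.+1.
Definition unpair2 (x : nat) : nat := ((x.+1 %/ 2 ^ (logn 2 x.+1)).-1)./2.

(* Codes of partial recursive functions (pairing-based basis). *)
Inductive rec : Type :=
| RZero | RSucc | RFst | RSnd
| RPair (f g : rec)
| RComp (f g : rec)
| RPrec (f g : rec)          (* <0,x> |-> f x ; <n+1,x> |-> g <n, <h<n,x>, x>> *)
| RMu (f : rec).             (* x |-> least n with f <n,x> = 0 *)

Inductive eval : rec -> nat -> nat -> Prop :=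
| eZero x : eval RZero x 0
| eSucc x : eval RSucc x x.+1
| eFst x : eval RFst x (unpair1 x)
| eSnd x : eval RSnd x (unpair2 x)
| ePair f g x a b : eval f x a -> eval g x b -> eval (RPair f g) x (npair a b)
| eComp f g x y z : eval g x y -> eval f y z -> eval (RComp f g) x z
| ePrec0 f g x a : eval f x a -> eval (RPrec f g) (npair 0 x) a
| ePrecS f g n x a b : eval (RPrec f g) (npair n x) a ->
    eval g (npair n (npair a x)) b -> eval (RPrec f g) (npair n.+1 x) b
| eMu f x n : eval f (npair n x) 0 ->
    (forall m, (m < n)%N -> exists k, eval f (npair m x) k.+1) ->
    eval (RMu f) x n.

Definition rec_pred (P : nat -> Prop) : Prop :=
  exists c : rec, forall x, (P x -> eval c x 0) /\ (~ P x -> eval c x 1).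

Inductive term (C : Type) : Type :=
| TVar (n : nat)
| TCst (c : C)
| TAdd (s t : term C)
| TMul (s t : term C).
Arguments TVar {C}.

(* An L-structure: carrier with the interpretations of +, * and of the
   constants; the ring opposite, zero and one are recorded too, since
   "recursive ring" needs them. *)
Record lstruct (C : Type) := LStruct {
  lcar : Type;
  ladd : lcar -> lcar -> lcar;
  lmul : lcar -> lcar -> lcar;
  lopp : lcar -> lcar;
  lzero : lcar;
  lone : lcar;
  lcst : C -> lcar }.
Arguments lcar {C} l.
Arguments ladd {C} l _ _.
Arguments lmul {C} l _ _.
Arguments lopp {C} l _.
Arguments lzero {C} l.
Arguments lone {C} l.
Arguments lcst {C} l _.

Fixpoint teval (R : Type) (add mul : R -> R -> R) (D : Type) (cst : D -> R)
   (v : nat -> R) (t : term D) : R :=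
  match t with
  | TVar n => v n
  | TCst c => cst c
  | TAdd s u => add (teval add mul cst v s) (teval add mul cst v u)
  | TMul s u => mul (teval add mul cst v s) (teval add mul cst v u)
  end.

(* A finite conjunction of basic formulas t1 = t2 (the only relation is =). *)
Definition system (D : Type) := seq (term D * term D).

Definition holds (R : Type) (add mul : R -> R -> R) (D : Type) (cst : D -> R)
   (sys : system D) (v : nat -> R) : Prop :=
  foldr (fun e P => teval add mul cst v e.1 = teval add mul cst v e.2 /\ P)
        True sys.

(* variables 0..k-1 are the free ones (x), variables k, k+1, ... are
   existentially quantified (y) *)
Definition env (R : Type) (k : nat) (x : 'I_k -> R) (y : nat -> R) : nat -> R :=
  fun i => oapp x (y (i - k)%N) (insub i : option 'I_k).

Definition dioph_set C (A : lstruct C) (k : nat) (sys : system C)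
  : ('I_k -> lcar A) -> Prop :=
  fun x => exists y : nat -> lcar A,
    holds (@ladd C A) (@lmul C A) (@lcst C A) sys (env x y).
Arguments dioph_set {C} A k sys.

Definition is_dioph C (A : lstruct C) (k : nat) (S : ('I_k -> lcar A) -> Prop) :=
  exists sys : system C, forall x, S x <-> dioph_set A k sys x.
Arguments is_dioph {C} A k S.

Definition image_set (T U : Type) (k : nat) (d : T -> U) (S : ('I_k -> T) -> Prop)
  : ('I_k -> U) -> Prop :=
  fun z => exists x, S x /\ forall j, z j = d (x j).

Definition dioph_map C1 C2 (A : lstruct C1) (B : lstruct C2)
  (d : lcar A -> lcar B) : Prop :=
  forall k (S : ('I_k -> lcar A) -> Prop), is_dioph A k S ->
    is_dioph B k (image_set d S).

Fixpoint enc_term (D : Type) (encD : D -> nat) (t : term D) : nat :=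
  match t with
  | TVar n => npair 0 n
  | TCst c => npair 1 (encD c)
  | TAdd s u => npair 2 (npair (enc_term encD s) (enc_term encD u))
  | TMul s u => npair 3 (npair (enc_term encD s) (enc_term encD u))
  end.

Fixpoint enc_sys (D : Type) (encD : D -> nat) (sys : system D) : nat :=
  match sys with
  | [::] => 0%N
  | e :: s => (npair (npair (enc_term encD e.1) (enc_term encD e.2))
                     (enc_sys encD s)).+1
  end.

Definition effective_dioph_map C1 C2 (enc1 : C1 -> nat) (enc2 : C2 -> nat)
  (A : lstruct C1) (B : lstruct C2) (d : lcar A -> lcar B) : Prop :=
  exists c : rec, forall (k : nat) (sys : system C1), exists sys' : system C2,
    eval c (npair k (enc_sys enc1 sys)) (enc_sys enc2 sys') /\
    forall z, image_set d (dioph_set A k sys) z <-> dioph_set B k sys' z.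

Definition Sc C (A : lstruct C) (a : lcar A) : Prop :=
  is_dioph A 1 (fun x => x ord0 = a).
Arguments Sc {C} A a.

(* (dom, nu) is a recursive presentation of the subring
   R0 = nu(dom) of A: dom is a recursive set of codes, nu is injective on
   dom, R0 contains 0 and 1, and +, *, - are computable on codes. *)
Definition rec_numbering C (A : lstruct C) (dom : nat -> Prop)
  (nu : nat -> lcar A) : Prop :=
  rec_pred dom /\
  (forall n m, dom n -> dom m -> nu n = nu m -> n = m) /\
  (exists z, dom z /\ nu z = lzero A) /\
  (exists o, dom o /\ nu o = lone A) /\
  (exists c : rec, forall n m, dom n -> dom m -> exists r,
      [/\ eval c (npair n m) r, dom r & nu r = ladd A (nu n) (nu m)]) /\
  (exists c : rec, forall n m, dom n -> dom m -> exists r,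
      [/\ eval c (npair n m) r, dom r & nu r = lmul A (nu n) (nu m)]) /\
  (exists c : rec, forall n, dom n -> exists r,
      [/\ eval c n r, dom r & nu r = lopp A (nu n)]).
Arguments rec_numbering {C} A dom nu.

(* coefficients (extra constants inr n) all carry codes in dom *)
Fixpoint tcoef_ok (C : Type) (P : nat -> Prop) (t : term (C + nat)) : Prop :=
  match t with
  | TVar _ => True
  | TCst (inl _) => True
  | TCst (inr n) => P n
  | TAdd s u => tcoef_ok P s /\ tcoef_ok P u
  | TMul s u => tcoef_ok P s /\ tcoef_ok P u
  end.

Definition coef_ok (C : Type) (P : nat -> Prop) (sys : system (C + nat)) :=
  foldr (fun e Q => tcoef_ok P e.1 /\ tcoef_ok P e.2 /\ Q) True sys.

Definition enc_sum (C : Type) (encC : C -> nat) (d : C + nat) : nat :=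
  match d with inl c => npair 0 (encC c) | inr n => npair 1 n end.

Definition coef_interp C (A : lstruct C) (nu : nat -> lcar A) (d : C + nat)
  : lcar A :=
  match d with inl c => lcst A c | inr n => nu n end.

Definition solvable C (A : lstruct C) (nu : nat -> lcar A)
  (sys : system (C + nat)) : Prop :=
  exists v : nat -> lcar A,
    holds (@ladd C A) (@lmul C A) (coef_interp nu) sys v.
Arguments solvable {C} A nu sys.

(* Hilbert's tenth problem over (A, L) has a negative answer: there is a
   recursive ring R0 with (constants of L) c R0 c S_c'(L), such that no
   algorithm decides solvability of finite systems of basic formulas with
   extra coefficients in R0. *)
Definition HTP_negative C (encC : C -> nat) (A : lstruct C) : Prop :=
  exists (dom : nat -> Prop) (nu : nat -> lcar A),
    [/\ rec_numbering A dom nu,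
        (forall c, exists n, dom n /\ nu n = lcst A c),
        (forall n, dom n -> Sc A (nu n)) &
        ~ exists c : rec, forall sys : system (C + nat), coef_ok dom sys ->
            (solvable A nu sys -> eval c (enc_sys (enc_sum encC) sys) 0) /\
            (~ solvable A nu sys -> eval c (enc_sys (enc_sum encC) sys) 1)].

Inductive LT_const := cT0 | cT1 | cTT.
Definition enc_LT (c : LT_const) : nat :=
  match c with cT0 => 0 | cT1 => 1 | cTT => 2 end.

Inductive Ltau_const := ct0 | ct1 | ctIota | ctTau.
Definition enc_Ltau (c : Ltau_const) : nat :=
  match c with ct0 => 0 | ct1 => 1 | ctIota => 2 | ctTau => 3 end.

(* F[[T]] : sequences of coefficients, Cauchy product *)
Definition ps_mul (F : ringType) (a b : nat -> F) : nat -> F :=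
  fun n => \sum_(i < n.+1) a i * b (n - i)%N.

Definition psT (F : ringType) : lstruct LT_const :=
  {| lcar := nat -> F;
     ladd := fun a b i => a i + b i;
     lmul := @ps_mul F;
     lopp := fun a i => - a i;
     lzero := fun _ => 0;
     lone := fun i => (i == 0%N)%:R;
     lcst := fun c => match c with
                      | cT0 => fun _ => 0
                      | cT1 => fun i => (i == 0%N)%:R
                      | cTT => fun i => (i == 1%N)%:R
                      end |}.

(* K{{tau}} : (sum a_i tau^i)(sum b_j tau^j) = sum_k (sum_{i+j=k} a_i b_j^{q^i}) tau^k *)
Definition tw_mul (K : ringType) (q : nat) (a b : nat -> K) : nat -> K :=
  fun k => \sum_(i < k.+1) a i * (b (k - i)%N) ^+ (q ^ i).

Definition tw_scalar (K : ringType) (a : K) : nat -> K :=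
  fun i => if i == 0%N then a else 0.

(* the A-field structure iota0 : F_q[T] -> K with iota0(T) = 0 *)
Definition iota0_T (K : ringType) : K := 0.

Definition tps (K : ringType) (q : nat) : lstruct Ltau_const :=
  {| lcar := nat -> K;
     ladd := fun a b i => a i + b i;
     lmul := tw_mul q;
     lopp := fun a i => - a i;
     lzero := fun _ => 0;
     lone := fun i => (i == 0%N)%:R;
     lcst := fun c => match c with
                      | ct0 => fun _ => 0
                      | ct1 => fun i => (i == 0%N)%:R
                      | ctIota => tw_scalar (iota0_T K)
                      | ctTau => fun i => (i == 1%N)%:R
                      end |}.

(* phi(sum a_i T^i) = sum a_i tau^i, F_q seen inside K via iota *)
Definition carlitz_ext (F K : ringType) (iota : F -> K) (f : nat -> F) : nat -> K :=
  fun i => iota (f i).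

Arguments dioph_map {C1 C2} A B d.
Arguments effective_dioph_map {C1 C2} enc1 enc2 A B d.
Arguments HTP_negative {C} encC A.

(* Since x^(q^i) = x on F_q, the coefficientwise map phi is an injective ring
   morphism F_q[[T]] -> K{{tau}} sending T to tau, and its image is the
   centraliser of tau: (sum a_i tau^i) tau = tau (sum a_i tau^i) iff
   a_i^q = a_i for all i, iff every a_i is a root of X^q - X, i.e. lies in F_q.
   So a system defining S over F_q[[T]] defines phi(S) over K{{tau}} once T is
   replaced by tau and the equations x tau = tau x are added for every
   variable x; all variable indices are bounded by the code of the system.
   This translation is primitive recursive on Goedel codes, which gives
   effectiveness, and it maps systems with coefficients in a recursive subring
   R0 to equisolvable systems with coefficients in phi(R0), which transfers
   the undecidability. *)

From mathcomp Require Import all_boot all_order all_algebra all_field.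
From mathcomp Require Import zify.
From Stdlib Require Import FunctionalExtensionality.
Set Implicit Arguments. Unset Strict Implicit. Unset Printing Implicit Defensive.

(** * Pairing and primitive recursive functions *)

Lemma npairS a b : (npair a b).+1 = 2 ^ a * (b.*2).+1.
Proof. by rewrite /npair prednK // muln_gt0 expn_gt0. Qed.

Lemma unpair1K a b : unpair1 (npair a b) = a.
Proof.
rewrite /unpair1 npairS lognM ?expn_gt0 // pfactorK // logn_coprime ?addn0 //.
by rewrite coprime2n /= odd_double.
Qed.

Lemma unpair2K a b : unpair2 (npair a b) = b.
Proof.
by rewrite /unpair2 -/(unpair1 (npair a b)) unpair1K npairS mulKn ?expn_gt0 ?doubleK.
Qed.

Lemma unpairK x : npair (unpair1 x) (unpair2 x) = x.
Proof.
have [m odd_m def_x] := pfactor_coprime (isT : prime 2) (ltn0Sn x).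
rewrite coprime2n in odd_m.
rewrite /unpair2 -/(unpair1 x) /unpair1 in def_x *.
set e := logn 2 x.+1 in def_x *.
rewrite def_x mulnK ?expn_gt0 //.
have m_gt0 : 0 < m by case: m odd_m {def_x}.
have half_m : (m.-1)./2.*2 = m.-1.
  by have := odd_double_half m.-1; case: m odd_m m_gt0 {def_x} => // m /= /negbTE ->.
by apply: succn_inj; rewrite npairS half_m prednK // mulnC -def_x.
Qed.

Lemma npair_inj a b c d : npair a b = npair c d -> a = c /\ b = d.
Proof.
by move=> E; split; [rewrite -(unpair1K a b) E unpair1K | rewrite -(unpair2K a b) E unpair2K].
Qed.

Lemma leq_npair1 a b : a <= npair a b.
Proof. by have := ltn_expl a (ltnSn 1); have := npairS a b; nia. Qed.

Lemma leq_npair2 a b : b <= npair a b.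
Proof. by have := expn_gt0 2 a; have := npairS a b; nia. Qed.

Lemma ltn_npair2 a b : 1 < a -> b < npair a b.
Proof.
move=> a_gt1; have : 2 ^ 2 <= 2 ^ a by rewrite leq_exp2l.
by have := npairS a b; nia.
Qed.

Definition computes (c : rec) (f : nat -> nat) := forall x, eval c x (f x).

Definition computable (f : nat -> nat) := exists c, computes c f.

Lemma eq_computable f g : computable f -> f =1 g -> computable g.
Proof. by move=> [c Hf] E; exists c => x; rewrite -E. Qed.

Lemma computable_zero : computable (fun _ => 0).
Proof. by exists RZero; apply: eZero. Qed.

Lemma computable_succ : computable S.
Proof. by exists RSucc; apply: eSucc. Qed.

Lemma computable_fst : computable unpair1.
Proof. by exists RFst; apply: eFst. Qed.

Lemma computable_snd : computable unpair2.
Proof. by exists RSnd; apply: eSnd. Qed.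

Lemma computable_comp f g :
  computable f -> computable g -> computable (fun x => f (g x)).
Proof. by move=> [cf Hf] [cg Hg]; exists (RComp cf cg) => x; apply: eComp (Hg x) (Hf _). Qed.

Lemma computable_pair f g :
  computable f -> computable g -> computable (fun x => npair (f x) (g x)).
Proof. by move=> [cf Hf] [cg Hg]; exists (RPair cf cg) => x; apply: ePair. Qed.

Fixpoint prim (f g : nat -> nat) n y :=
  if n is n'.+1 then g (npair n' (npair (prim f g n' y) y)) else f y.

Lemma computable_prec f g : computable f -> computable g ->
  computable (fun x => prim f g (unpair1 x) (unpair2 x)).
Proof.
move=> [cf Hf] [cg Hg]; exists (RPrec cf cg) => x; rewrite -{1}(unpairK x).
by elim: (unpair1 x) => [|n IHn]; [apply: ePrec0 | apply: ePrecS IHn (Hg _)].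
Qed.

Lemma computable_id : computable id.
Proof. exact: eq_computable (computable_pair computable_fst computable_snd) unpairK. Qed.

Lemma computable_const m : computable (fun _ => m).
Proof.
by elim: m => [|m IHm]; [apply: computable_zero | apply: computable_comp computable_succ IHm].
Qed.

Lemma computable_ifz t u v : computable t -> computable u -> computable v ->
  computable (fun x => if t x == 0 then u x else v x).
Proof.
move=> Ht Hu Hv; apply: eq_computable (computable_comp (computable_prec Hu
  (computable_comp Hv (computable_comp computable_snd computable_snd)))
  (computable_pair Ht computable_id)) _.
by move=> x /=; rewrite unpair1K unpair2K; case: (t x) => //= n; rewrite !unpair2K.
Qed.

Lemma computable_pred : computable predn.
Proof.
apply: eq_computable (computable_comp (computable_prec computable_zero computable_fst)
  (computable_pair computable_id computable_zero)) _.
by move=> x /=; rewrite unpair1K unpair2K; case: x => //= n; rewrite unpair1K.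
Qed.

Lemma computable_sub a b : computable a -> computable b -> computable (fun x => a x - b x).
Proof.
move=> Ha Hb; apply: eq_computable (computable_comp (computable_prec computable_id
  (computable_comp computable_pred (computable_comp computable_fst computable_snd)))
  (computable_pair Hb Ha)) _.
move=> x /=; rewrite unpair1K unpair2K.
by elim: (b x) => [|n IHn] /=; rewrite ?subn0 // unpair2K unpair1K IHn subnS.
Qed.

Lemma computable_ifeq a b u v :
  computable a -> computable b -> computable u -> computable v ->
  computable (fun x => if a x == b x then u x else v x).
Proof.
move=> Ha Hb Hu Hv; apply: eq_computable
  (computable_ifz (computable_sub Ha Hb) (computable_ifz (computable_sub Hb Ha) Hu Hv) Hv) _.
by move=> x /=; rewrite !subn_eq0 eqn_leq; case: (a x <= b x); case: (b x <= a x).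
Qed.

Lemma computable_add a b : computable a -> computable b -> computable (fun x => a x + b x).
Proof.
move=> Ha Hb; apply: eq_computable (computable_comp (computable_prec computable_id
  (computable_comp computable_succ (computable_comp computable_fst computable_snd)))
  (computable_pair Hb Ha)) _.
move=> x /=; rewrite unpair1K unpair2K.
by elim: (b x) => [|n IHn] /=; rewrite ?addn0 // unpair2K unpair1K IHn addnS.
Qed.

Lemma computable_iter n x : computable n -> computable x ->
  computable (fun y => iter (n y) unpair2 (x y)).
Proof.
move=> Hn Hx; apply: eq_computable (computable_comp (computable_prec computable_id
  (computable_comp computable_snd (computable_comp computable_fst computable_snd)))
  (computable_pair Hn Hx)) _.
by move=> y /=; rewrite unpair1K unpair2K; elim: (n y) => //= m ->; rewrite unpair2K unpair1K.
Qed.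

(** * Translation of Goedel codes *)

Fixpoint Tab s n :=
  if n is n'.+1 then npair (s (npair n' (Tab s n'))) (Tab s n') else 0.

Definition cov s x := s (npair x (Tab s x)).

Definition lk p i := unpair1 (iter (unpair1 p - i.+1) unpair2 (unpair2 p)).

Lemma lk_Tab s n i : i < n -> lk (npair n (Tab s n)) i = cov s i.
Proof.
rewrite /lk unpair1K unpair2K; elim: n => // n IHn.
rewrite ltnS leq_eqVlt => /orP [/eqP->|lt_in]; first by rewrite subnn /= unpair1K.
by rewrite subSS -(subnSK lt_in) iterSr /= unpair2K IHn.
Qed.

Lemma computable_cov s : computable s -> computable (cov s).
Proof.
move=> Hs; have Htab := computable_prec computable_zero (computable_pair
  (computable_comp Hs (computable_pair computable_fst
                                       (computable_comp computable_fst computable_snd)))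
  (computable_comp computable_fst computable_snd)).
apply: eq_computable (computable_comp computable_fst
  (computable_comp Htab (computable_pair computable_succ computable_id))) _.
move=> x /=; rewrite unpair1K unpair2K.
suff -> : forall n, prim (fun _ => 0) (fun y => npair (s (npair (unpair1 y)
  (unpair1 (unpair2 y)))) (unpair1 (unpair2 y))) n x = Tab s n by rewrite /= unpair1K.
by elim=> //= n IHn; rewrite !(unpair1K, unpair2K) IHn.
Qed.

Lemma computable_lk p i : computable p -> computable i ->
  computable (fun x => lk (p x) (i x)).
Proof.
move=> Hp Hi; apply: computable_comp computable_fst (computable_iter
  (computable_sub (computable_comp computable_fst Hp) (computable_comp computable_succ Hi))
  (computable_comp computable_snd Hp)).
Qed.

Section CodeTranslation.
Variables L1 L2 : nat.

(* A course-of-values step: [p] packs the code [x] being translated with the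
   table of the translations of all smaller codes, and subterm codes are
   smaller than [x]. *)
Definition tr_term_step p :=
  let x := unpair1 p in
  if x == npair 1 L1 then npair 1 L2
  else if 2 - unpair1 x == 0 then
    npair (unpair1 x) (npair (lk p (unpair1 (unpair2 x))) (lk p (unpair2 (unpair2 x))))
  else x.

Definition tr_term := cov tr_term_step.

Lemma computable_tr_term : computable tr_term.
Proof.
have [H1 H2] := (computable_const 1, computable_const 2).
have Hx1 := computable_comp computable_fst computable_fst.
have Hsub f := computable_lk computable_id (computable_comp f
  (computable_comp computable_snd computable_fst)).
apply/computable_cov/(computable_ifeq computable_fst
  (computable_pair H1 (computable_const L1)) (computable_pair H1 (computable_const L2))
  (computable_ifz (computable_sub H2 Hx1)
     (computable_pair Hx1 (computable_pair (Hsub _ computable_fst) (Hsub _ computable_snd)))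
     computable_fst)).
Qed.

Lemma tr_term_var n : tr_term (npair 0 n) = npair 0 n.
Proof. by rewrite /tr_term /cov /tr_term_step !unpair1K; case: eqP => // /npair_inj []. Qed.

Lemma tr_term_cst c : tr_term (npair 1 c) = if c == L1 then npair 1 L2 else npair 1 c.
Proof.
rewrite /tr_term /cov /tr_term_step !unpair1K.
case: eqP => [/npair_inj [_ ->]|ne]; first by rewrite eqxx.
by case: (c =P L1) => // E; case: ne; rewrite E.
Qed.

Lemma tr_term_node t a b : 1 < t ->
  tr_term (npair t (npair a b)) = npair t (npair (tr_term a) (tr_term b)).
Proof.
move=> t_gt1; rewrite {1}/tr_term /cov /tr_term_step !unpair1K.
case: eqP => [/npair_inj [t1 _]|_]; first by rewrite t1 in t_gt1.
have lt_ab := ltn_npair2 (npair a b) t_gt1.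
rewrite ifT ?subn_eq0 // !(unpair1K, unpair2K) !lk_Tab //.
  exact: leq_ltn_trans (leq_npair2 a b) lt_ab.
exact: leq_ltn_trans (leq_npair1 a b) lt_ab.
Qed.

Definition tr_sys_step p :=
  let x := unpair1 p in
  if x == 0 then 0 else
  (npair (npair (tr_term (unpair1 (unpair1 x.-1))) (tr_term (unpair2 (unpair1 x.-1))))
         (lk p (unpair2 x.-1))).+1.

Definition tr_sys := cov tr_sys_step.

Lemma computable_tr_sys : computable tr_sys.
Proof.
have Hx := computable_comp computable_pred computable_fst.
have Hside f := computable_comp computable_tr_term
  (computable_comp f (computable_comp computable_fst Hx)).
apply/computable_cov/(computable_ifz computable_fst (computable_const 0)
  (computable_comp computable_succ (computable_pair
     (computable_pair (Hside _ computable_fst) (Hside _ computable_snd))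
     (computable_lk computable_id (computable_comp computable_snd Hx))))).
Qed.

Lemma tr_sys_nil : tr_sys 0 = 0.
Proof. by rewrite /tr_sys /cov /tr_sys_step unpair1K. Qed.

Lemma tr_sys_cons a b r :
  tr_sys (npair (npair a b) r).+1 = (npair (npair (tr_term a) (tr_term b)) (tr_sys r)).+1.
Proof.
rewrite {1}/tr_sys /cov /tr_sys_step unpair1K succnK !(unpair1K, unpair2K).
by rewrite lk_Tab // ltnS leq_npair2.
Qed.

(* The code of the equation [x_j * tau = tau * x_j] (constant code [L2] for
   tau), consed onto the accumulated system code. *)
Definition add_comm_eq z :=
  let j := unpair1 z in
  (npair (npair (npair 3 (npair (npair 0 j) (npair 1 L2)))
                (npair 3 (npair (npair 1 L2) (npair 0 j))))
         (unpair1 (unpair2 z))).+1.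

Lemma computable_translate :
  computable (fun x => prim tr_sys add_comm_eq (unpair2 x + unpair1 x) (unpair2 x)).
Proof.
have H3 := computable_const 3.
have Hvar := computable_pair (computable_const 0) computable_fst.
have Htau := computable_pair (computable_const 1) (computable_const L2).
have Hstep : computable add_comm_eq.
  apply: computable_comp computable_succ (computable_pair (computable_pair
      (computable_pair H3 (computable_pair Hvar Htau))
      (computable_pair H3 (computable_pair Htau Hvar)))
    (computable_comp computable_fst computable_snd)).
apply: eq_computable (computable_comp (computable_prec computable_tr_sys Hstep)
  (computable_pair (computable_add computable_snd computable_fst) computable_snd)) _.
by move=> x /=; rewrite unpair1K unpair2K.
Qed.

End CodeTranslation.

(** * Translation of systems *)

Section TermVars.
Variable D : Type.

Fixpoint tvars (t : term D) : nat :=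
  match t with
  | TVar n => n.+1
  | TCst _ => 0
  | TAdd s u | TMul s u => maxn (tvars s) (tvars u)
  end.

Definition svars (sys : system D) : nat :=
  foldr (fun e m => maxn (maxn (tvars e.1) (tvars e.2)) m) 0 sys.

Lemma tvars_enc (enc : D -> nat) t : tvars t <= (enc_term enc t).+1.
Proof.
have node_bound k a b u v : a <= u.+1 -> b <= v.+1 ->
    maxn a b <= (npair k (npair u v)).+1.
  move=> le_au le_bv; rewrite geq_max; apply/andP; split.
    by apply: leq_trans le_au _; rewrite ltnS (leq_trans (leq_npair1 u v)) ?leq_npair2.
  by apply: leq_trans le_bv _; rewrite ltnS (leq_trans (leq_npair2 u v)) ?leq_npair2.
by elim: t => [n|c|s IHs u IHu|s IHs u IHu] //=; rewrite ?ltnS ?leq_npair2 ?node_bound.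
Qed.

Lemma svars_enc (enc : D -> nat) sys : svars sys <= enc_sys enc sys.
Proof.
elim: sys => [|[t1 t2] sys IHsys] //=.
rewrite !geq_max (leq_trans IHsys) ?(leqW (leq_npair2 _ _)) // andbT.
apply/andP; split; apply: leq_trans (tvars_enc enc _) _; rewrite ltnS.
  exact: leq_trans (leq_npair1 _ _) (leq_npair1 _ _).
exact: leq_trans (leq_npair2 _ _) (leq_npair1 _ _).
Qed.

Lemma eq_teval_vars R add mul (cst : D -> R) (w1 w2 : nat -> R) t :
  (forall i, i < tvars t -> w1 i = w2 i) ->
  teval add mul cst w1 t = teval add mul cst w2 t.
Proof.
elim: t => [n|c|s IHs u IHu|s IHs u IHu] //= E; first exact: E.
- by rewrite IHs ?IHu // => i lt_i; apply: E; rewrite leq_max lt_i ?orbT.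
- by rewrite IHs ?IHu // => i lt_i; apply: E; rewrite leq_max lt_i ?orbT.
Qed.

Lemma eq_holds_vars R add mul (cst : D -> R) (w1 w2 : nat -> R) sys :
  (forall i, i < svars sys -> w1 i = w2 i) ->
  holds add mul cst sys w1 <-> holds add mul cst sys w2.
Proof.
elim: sys => [|e sys IHsys] //= E.
have E1 i : i < tvars e.1 -> w1 i = w2 i by move=> lt_i; apply: E; rewrite !leq_max lt_i.
have E2 i : i < tvars e.2 -> w1 i = w2 i by move=> lt_i; apply: E; rewrite !leq_max lt_i orbT.
have Es i : i < svars sys -> w1 i = w2 i by move=> lt_i; apply: E; rewrite !leq_max lt_i orbT.
by rewrite (eq_teval_vars _ _ _ E1) (eq_teval_vars _ _ _ E2) (IHsys Es).
Qed.

End TermVars.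

Section SyntacticTranslation.
Variables (D1 D2 : Type) (cm : D1 -> D2) (tau : D2).

Fixpoint map_term (t : term D1) : term D2 :=
  match t with
  | TVar n => TVar n
  | TCst c => TCst (cm c)
  | TAdd s u => TAdd (map_term s) (map_term u)
  | TMul s u => TMul (map_term s) (map_term u)
  end.

Lemma tvars_map_term t : tvars (map_term t) = tvars t.
Proof. by elim: t => //= s -> u ->. Qed.

Definition map_sys (sys : system D1) : system D2 :=
  map (fun e => (map_term e.1, map_term e.2)) sys.

Definition tau_comm_eq j : term D2 * term D2 :=
  (TMul (TVar j) (TCst tau), TMul (TCst tau) (TVar j)).

Lemma svars_map_sys sys : svars (map_sys sys) = svars sys.
Proof. by elim: sys => //= e sys ->; rewrite !tvars_map_term. Qed.

Fixpoint translate_sys (sys : system D1) M : system D2 :=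
  if M is M'.+1 then tau_comm_eq M' :: translate_sys sys M' else map_sys sys.

Variables (enc1 : D1 -> nat) (enc2 : D2 -> nat) (L1 L2 : nat).
Hypothesis enc_cm : forall d, enc2 (cm d) = if enc1 d == L1 then L2 else enc1 d.
Hypothesis enc_tau : enc2 tau = L2.

Lemma enc_map_term t : tr_term L1 L2 (enc_term enc1 t) = enc_term enc2 (map_term t).
Proof.
elim: t => [n|c|s IHs u IHu|s IHs u IHu] /=; rewrite ?tr_term_node ?IHs ?IHu //.
  exact: tr_term_var.
by rewrite tr_term_cst enc_cm; case: eqP.
Qed.

Lemma enc_map_sys sys : tr_sys L1 L2 (enc_sys enc1 sys) = enc_sys enc2 (map_sys sys).
Proof.
by elim: sys => [|e sys IHsys] /=; rewrite ?tr_sys_nil ?tr_sys_cons ?enc_map_term ?IHsys.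
Qed.

Lemma enc_translate_sys sys M :
  prim (tr_sys L1 L2) (add_comm_eq L2) M (enc_sys enc1 sys) = enc_sys enc2 (translate_sys sys M).
Proof.
elim: M => [|M IHM] /=; first exact: enc_map_sys.
by rewrite /add_comm_eq !(unpair1K, unpair2K) IHM enc_tau.
Qed.

End SyntacticTranslation.

(** * The Carlitz extension and the centraliser of tau *)

Import GRing.Theory.
Local Open Scope ring_scope.

Section TauCommutation.
Variables (K : nzRingType) (q : nat).
Hypothesis q_gt0 : (0 < q)%N.

Definition tau_ps : nat -> K := fun i => (i == 1%N)%:R.

Lemma tw_mul_tau0 (x : nat -> K) : tw_mul q x tau_ps 0 = tw_mul q tau_ps x 0.
Proof. by rewrite /tw_mul !big_ord_recr !big_ord0 /= mulr0 mul0r. Qed.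

Lemma tw_mul_tauS (x : nat -> K) i : tw_mul q x tau_ps i.+1 = x i.
Proof.
have zero_pow j : (0 : K) ^+ (q ^ j) = 0 by rewrite expr0n expn_eq0 gtn_eqF.
rewrite /tw_mul big_ord_recr big_ord_recr /= subnn subSnn /tau_ps /= zero_pow mulr0 addr0.
rewrite expr1n mulr1 big1 ?add0r // => j _.
have : (2 <= i.+1 - j)%N by have := ltn_ord j; lia.
by case: (i.+1 - j)%N => [|[|n]] //= _; rewrite zero_pow mulr0.
Qed.

Lemma tw_tau_mulS (x : nat -> K) i : tw_mul q tau_ps x i.+1 = x i ^+ q.
Proof.
rewrite /tw_mul big_ord_recl big_ord_recl /tau_ps /= mul0r add0r mul1r subn1 /= expn1.
by rewrite big1 ?addr0 // => j _; rewrite mul0r.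
Qed.

Lemma tau_commuteP (x : nat -> K) :
  tw_mul q x tau_ps = tw_mul q tau_ps x <-> forall i, x i ^+ q = x i.
Proof.
split=> [E i | fixed_x].
  by have := congr1 (fun f => f i.+1) E; rewrite /= tw_mul_tauS tw_tau_mulS.
apply: functional_extensionality => [[|i]]; first exact: tw_mul_tau0.
by rewrite tw_mul_tauS tw_tau_mulS fixed_x.
Qed.

End TauCommutation.

Lemma fixed_in_image (F : finFieldType) (K : fieldType) (iota : {rmorphism F -> K}) (a : K) :
  a ^+ #|F| = a -> exists f, iota f = a.
Proof.
move=> fixed_a.
have : root (map_poly iota ('X^#|F| - 'X)) a.
  by rewrite rmorphB /= map_polyXn map_polyX /root !hornerE fixed_a subrr.
rewrite finField_genPoly rmorph_prod /=.
under eq_bigr do rewrite map_polyXsubC.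
rewrite -(big_map iota xpredT (fun y => 'X - y%:P)).
by rewrite root_prod_XsubC => /mapP [f _ ->]; exists f.
Qed.

Section CarlitzExtension.
Variables (F : finFieldType) (K : fieldType) (iota : {rmorphism F -> K}).
Local Notation q := #|F|.
Local Notation phi := (carlitz_ext iota).

Let q_gt0 : (0 < q)%N := ltnW (card_finNzRing_gt1 F).

Lemma carlitz_extD a b : phi (fun i => a i + b i) = (fun i => phi a i + phi b i).
Proof. by apply: functional_extensionality => i; rewrite /carlitz_ext rmorphD. Qed.

Lemma carlitz_extN a : phi (fun i => - a i) = (fun i => - phi a i).
Proof. by apply: functional_extensionality => i; rewrite /carlitz_ext rmorphN. Qed.

Lemma carlitz_extM a b : phi (ps_mul a b) = tw_mul q (phi a) (phi b).
Proof.
have frob_id (x : F) i : x ^+ (q ^ i) = x.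
  by elim: i => [|i IHi]; rewrite ?expr1 // expnSr exprM IHi expf_card.
apply: functional_extensionality => k; rewrite /carlitz_ext /ps_mul /tw_mul rmorph_sum.
by apply: eq_bigr => i _; rewrite rmorphM -rmorphXn frob_id.
Qed.

Lemma carlitz_ext_inj : injective phi.
Proof.
move=> a b E; apply: functional_extensionality => i.
by apply: (fmorph_inj iota); have := congr1 (fun f => f i) E.
Qed.

Lemma carlitz_ext_commute_tau a : tw_mul q (phi a) (tau_ps K) = tw_mul q (tau_ps K) (phi a).
Proof. by apply/(tau_commuteP q_gt0) => i; rewrite /carlitz_ext -rmorphXn expf_card. Qed.

Definition preimage (x : K) : F := odflt 0 [pick f | iota f == x].

Lemma preimageK (x : K) : x ^+ q = x -> iota (preimage x) = x.
Proof.
move=> /(fixed_in_image iota) [f iota_f]; rewrite /preimage.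
by case: pickP => [g /eqP //|/(_ f)]; rewrite iota_f eqxx.
Qed.

Lemma carlitz_ext_preimage (x : nat -> K) :
  tw_mul q x (tau_ps K) = tw_mul q (tau_ps K) x -> phi (fun i => preimage (x i)) = x.
Proof.
move=> /(tau_commuteP q_gt0) fixed_x; apply: functional_extensionality => i.
by rewrite /carlitz_ext preimageK ?fixed_x.
Qed.

End CarlitzExtension.

Section SemanticTranslation.
Variables (F : finFieldType) (K : fieldType) (iota : {rmorphism F -> K}).
Local Notation q := #|F|.
Local Notation phi := (carlitz_ext iota).
Variables (D1 D2 : Type) (cst1 : D1 -> nat -> F) (cst2 : D2 -> nat -> K).
Variables (cm : D1 -> D2) (tau : D2).
Hypothesis cst_cm : forall d, cst2 (cm d) = phi (cst1 d).
Hypothesis cst_tau : cst2 tau = tau_ps K.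

Local Notation teval1 := (teval (fun a b i => a i + b i) (@ps_mul F) cst1).
Local Notation teval2 := (teval (fun a b i => a i + b i) (tw_mul q) cst2).
Local Notation holds1 := (holds (fun a b i => a i + b i) (@ps_mul F) cst1).
Local Notation holds2 := (holds (fun a b i => a i + b i) (tw_mul q) cst2).

Lemma teval_map_term v t :
  teval2 (fun i => phi (v i)) (map_term cm t) = phi (teval1 v t).
Proof.
by elim: t => //= s -> u ->; rewrite ?carlitz_extD ?carlitz_extM.
Qed.

Lemma holds_map_sys sys v :
  holds2 (map_sys cm sys) (fun i => phi (v i)) <-> holds1 sys v.
Proof.
elim: sys => [|e sys IHsys] //=; rewrite !teval_map_term IHsys.
by split=> [[/carlitz_ext_inj]|[->]].
Qed.

Lemma holds_translate_sysP sys M w :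
  holds2 (translate_sys cm tau sys M) w <->
  holds2 (map_sys cm sys) w /\
  forall i, (i < M)%N -> tw_mul q (w i) (tau_ps K) = tw_mul q (tau_ps K) (w i).
Proof.
elim: M => [|M IHM] /=; first by split=> [|[]].
rewrite cst_tau IHM; split=> [[comm_M [Hw comm_w]]|[Hw comm_w]].
  by split=> // i; rewrite ltnS leq_eqVlt => /orP [/eqP ->|/comm_w].
by split; [apply: comm_w | split=> // i lt_iM; apply: comm_w; rewrite ltnW].
Qed.

Lemma holds_translate_sys sys M w : (svars sys <= M)%N ->
  holds2 (translate_sys cm tau sys M) w <->
  exists2 v, (forall i, (i < M)%N -> w i = phi (v i)) & holds1 sys v.
Proof.
move=> le_sM; rewrite holds_translate_sysP.
have agree v : (forall i, (i < M)%N -> w i = phi (v i)) ->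
    holds2 (map_sys cm sys) w <-> holds1 sys v.
  move=> Ev; rewrite -holds_map_sys; apply: eq_holds_vars => i.
  by rewrite svars_map_sys => lt_is; apply: Ev (leq_trans lt_is le_sM).
split=> [[Hw comm_w] | [v Ev Hv]].
  have Ew i : (i < M)%N -> w i = phi (fun n => preimage iota (w i n)).
    by move=> /comm_w /carlitz_ext_preimage ->.
  by exists (fun i n => preimage iota (w i n)); rewrite // -(agree _ Ew).
by split=> [|i /Ev ->]; [rewrite (agree v) | apply: carlitz_ext_commute_tau].
Qed.

End SemanticTranslation.

(** * Diophantine sets and Hilbert's tenth problem *)

Section Env.
Variables (T : Type) (k : nat).

Lemma env_ord (x : 'I_k -> T) y (j : 'I_k) : env x y j = x j.
Proof. by rewrite /env valK. Qed.

Lemma env_comp U (f : T -> U) (x : 'I_k -> T) y :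
  env (fun j => f (x j)) (fun i => f (y i)) = (fun i => f (env x y i)).
Proof. by apply: functional_extensionality => i; rewrite /env; case: insub. Qed.

Lemma env_split (v : nat -> T) : env (fun j : 'I_k => v j) (fun i => v (i + k)%N) = v.
Proof.
apply: functional_extensionality => i; case: (ltnP i k) => [lt_ik | le_ki].
  by rewrite -[i]/(val (Ordinal lt_ik)) env_ord.
by rewrite /env insubF ?subnK // ltnNge le_ki.
Qed.

End Env.

Definition cm_LT (c : LT_const) : Ltau_const :=
  match c with cT0 => ct0 | cT1 => ct1 | cTT => ctTau end.

Definition cm_coef (d : LT_const + nat) : Ltau_const + nat :=
  match d with inl c => inl (cm_LT c) | inr n => inr n end.

Lemma enc_cm_LT c : enc_Ltau (cm_LT c) = if enc_LT c == 2%N then 3%N else enc_LT c.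
Proof. by case: c. Qed.

Lemma enc_cm_coef d : enc_sum enc_Ltau (cm_coef d) =
  if enc_sum enc_LT d == npair 0 2 then npair 0 3 else enc_sum enc_LT d.
Proof. by case: d => [[]|n] //=; case: eqP => // /npair_inj []. Qed.

Section CarlitzDiophantine.
Variables (F : finFieldType) (K : fieldType) (iota : {rmorphism F -> K}).
Local Notation q := #|F|.
Local Notation phi := (carlitz_ext iota).

Lemma carlitz_ext_cst c : lcst (tps K q) (cm_LT c) = phi (lcst (psT F) c).
Proof.
by apply: functional_extensionality => i; case: c; rewrite /carlitz_ext /= ?rmorph0 ?rmorph_nat.
Qed.

Lemma image_dioph_set k sys z :
  image_set phi (dioph_set (psT F) k sys) z <->
  dioph_set (tps K q) k (translate_sys cm_LT ctTau sys (enc_sys enc_LT sys + k)) z.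
Proof.
have le_sM : (svars sys <= enc_sys enc_LT sys + k)%N :=
  leq_trans (svars_enc _ _) (leq_addr _ _).
have cst_tau : lcst (tps K q) ctTau = tau_ps K by [].
have HT := holds_translate_sys carlitz_ext_cst cst_tau _ le_sM.
split=> [[x [[y Hy] /functional_extensionality ->]] | [y /HT [v Ev Hv]]].
  by exists (fun i => phi (y i)); apply/HT; exists (env x y) => //; rewrite env_comp.
exists (fun j => v j); split; first by exists (fun i => v (i + k)%N); rewrite env_split.
by move=> j; rewrite -(env_ord z y) Ev // ltn_addl.
Qed.

Lemma carlitz_dioph_map : dioph_map (psT F) (tps K q) phi.
Proof.
move=> k S [sys def_S]; exists (translate_sys cm_LT ctTau sys (enc_sys enc_LT sys + k)) => z.
rewrite -image_dioph_set.
by split=> -[x [Sx Ez]]; exists x; split=> //; apply/def_S.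
Qed.

Lemma carlitz_effective_dioph_map :
  effective_dioph_map enc_LT enc_Ltau (psT F) (tps K q) phi.
Proof.
have [c Hc] := computable_translate 2 3.
exists c => k sys; exists (translate_sys cm_LT ctTau sys (enc_sys enc_LT sys + k)).
split; last exact: image_dioph_set.
have := Hc (npair k (enc_sys enc_LT sys)); rewrite unpair1K unpair2K.
by rewrite (enc_translate_sys (tau := ctTau) enc_cm_LT).
Qed.

End CarlitzDiophantine.

Lemma coef_ok_translate_sys (P : nat -> Prop) sys M :
  coef_ok P sys -> coef_ok P (translate_sys cm_coef (inl ctTau) sys M).
Proof.
have ok_map t : tcoef_ok P t -> tcoef_ok P (map_term cm_coef t).
  by elim: t => [n|[c|n]|s IHs u IHu|s IHs u IHu] //= [/IHs ? /IHu ?].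
move=> ok_sys; elim: M => [|M IHM] //=.
by elim: sys ok_sys => [|e sys IHsys] //= [/ok_map ? [/ok_map ? /IHsys ?]].
Qed.

Section CarlitzHTP.
Variables (F : finFieldType) (K : fieldType) (iota : {rmorphism F -> K}).
Local Notation q := #|F|.
Local Notation phi := (carlitz_ext iota).
Variables (dom : nat -> Prop) (nu : nat -> nat -> F).

Lemma carlitz_rec_numbering :
  rec_numbering (psT F) dom nu -> rec_numbering (tps K q) dom (fun n => phi (nu n)).
Proof.
case=> rec_dom [nu_inj [[z [dz nu_z]] [[o [don nu_o]] [[cadd Hadd] [[cmul Hmul] [copp Hopp]]]]]].
do ![split] => //.
- by move=> n m dn dm /carlitz_ext_inj; apply: nu_inj.
- by exists z; rewrite nu_z -(carlitz_ext_cst iota cT0).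
- by exists o; rewrite nu_o -(carlitz_ext_cst iota cT1).
- exists cadd => n m dn dm; have [r [ev dr nu_r]] := Hadd n m dn dm.
  by exists r; rewrite nu_r /= carlitz_extD.
- exists cmul => n m dn dm; have [r [ev dr nu_r]] := Hmul n m dn dm.
  by exists r; rewrite nu_r /= carlitz_extM.
- exists copp => n dn; have [r [ev dr nu_r]] := Hopp n dn.
  by exists r; rewrite nu_r /= carlitz_extN.
Qed.

Lemma carlitz_cst_numbered :
  (forall c, exists n, dom n /\ nu n = lcst (psT F) c) ->
  forall c, exists n, dom n /\ phi (nu n) = lcst (tps K q) c.
Proof.
move=> cst_nu c.
have [c' def_c] : exists c', lcst (tps K q) c = lcst (tps K q) (cm_LT c').
  (* iota0(T) = 0 is the image of the constant 0 *)
  case: c; [exists cT0 | exists cT1 | exists cT0 | exists cTT] => //=.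
  by apply: functional_extensionality => i; rewrite /tw_scalar /iota0_T if_same.
by have [n [dn nu_n]] := cst_nu c'; exists n; rewrite def_c (carlitz_ext_cst iota) nu_n.
Qed.

Lemma carlitz_Sc a : Sc (psT F) a -> Sc (tps K q) (phi a).
Proof.
move=> /(carlitz_dioph_map iota) [sys def_S]; exists sys => z; rewrite -def_S.
split=> [z0 | [x [x0 ->]]]; last by rewrite x0.
by exists (fun _ => a); split=> // j; rewrite (ord1 j).
Qed.

Lemma solvable_translate_sys sys :
  solvable (psT F) nu sys <->
  solvable (tps K q) (fun n => phi (nu n))
    (translate_sys cm_coef (inl ctTau) sys (enc_sys (enc_sum enc_LT) sys + 0)).
Proof.
have cst_cm d : coef_interp (A := tps K q) (fun n => phi (nu n)) (cm_coef d) =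
                phi (coef_interp (A := psT F) nu d).
  by case: d => [c|n] //; apply: carlitz_ext_cst.
have le_sM : (svars sys <= enc_sys (enc_sum enc_LT) sys + 0)%N.
  by rewrite addn0 svars_enc.
have cst_tau : coef_interp (A := tps K q) (fun n => phi (nu n)) (inl ctTau) = tau_ps K by [].
have HT := holds_translate_sys cst_cm cst_tau _ le_sM.
split=> [[v Hv] | [w /HT [v _ Hv]]]; last by exists v.
by exists (fun i => phi (v i)); apply/HT; exists v.
Qed.

End CarlitzHTP.

Lemma carlitz_HTP_negative (F : finFieldType) (K : fieldType) (iota : {rmorphism F -> K}) :
  HTP_negative enc_LT (psT F) -> HTP_negative enc_Ltau (tps K #|F|).
Proof.
case=> dom [nu [num_nu cst_nu Sc_nu undec]].
exists dom, (fun n => carlitz_ext iota (nu n)); split.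
- exact: carlitz_rec_numbering.
- exact: carlitz_cst_numbered.
- by move=> n /Sc_nu /(carlitz_Sc iota).
case=> c dec; apply: undec.
have [ct Hct] := computable_comp (computable_translate (npair 0 2) (npair 0 3))
  (computable_pair computable_zero computable_id).
exists (RComp c ct) => sys ok_sys.
have [dec_yes dec_no] := dec _ (coef_ok_translate_sys (enc_sys (enc_sum enc_LT) sys + 0) ok_sys).
have := Hct (enc_sys (enc_sum enc_LT) sys); rewrite /= unpair1K unpair2K.
rewrite (enc_translate_sys (tau := inl ctTau) enc_cm_coef) // => ev.
split=> [/(solvable_translate_sys iota) | no_sol]; first by move/dec_yes; apply: eComp ev.
by apply: eComp ev (dec_no _) => /(solvable_translate_sys iota).
Qed.

Theorem mainTheorem5 (F : finFieldType) (K : fieldType)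
  (iota : {rmorphism F -> K}) :
  (dioph_map (psT F) (tps K #|F|) (carlitz_ext iota) /\
   effective_dioph_map enc_LT enc_Ltau (psT F) (tps K #|F|) (carlitz_ext iota)) /\
  (HTP_negative enc_LT (psT F) -> HTP_negative enc_Ltau (tps K #|F|)).
Proof.
split; last exact: carlitz_HTP_negative.
by split; [apply: carlitz_dioph_map | apply: carlitz_effective_dioph_map].
Qed.
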